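(* Let $G$ be a finite abelian group, $k\ge1$, $\Gamma=G\wr\mathbb{Z}^k=\Sigma\rtimes_\alpha\mathbb{Z}^k$, and let $\varphi:\Gamma\to\Gamma$ be an automorphism. Let $\varphi'=\varphi|_\Sigma:\Sigma\to\Sigma$ and let $\overline{\varphi}:\mathbb{Z}^k\to\mathbb{Z}^k$ be the automorphism induced by $\varphi$ on $\Gamma/\Sigma\cong\mathbb{Z}^k$. Then $R(\varphi)<\infty$ if and only if $R(\overline{\varphi})<\infty$ and $R(\tau_m\circ\varphi')<\infty$ for every $m\in\mathbb{Z}^k$. Moreover, in the ''if'' direction it suffices to require $R(\tau_m\circ\varphi')<\infty$ only for $m$ running over a set of representatives of the Reidemeister classes of $\overline{\varphi}$ (together with $R(\overline{\varphi})<\infty$).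
   Context: Reidemeister number: for an endomorphism $\psi$ of a group $\Gamma$, $x,y$ are $\psi$-conjugate if $y=gx\psi(g^{-1})$ for some $g\in\Gamma$; $R(\psi)$ is the number of such classes (possibly $\infty$). $G\wr\mathbb{Z}^k=\Sigma\rtimes_\alpha\mathbb{Z}^k$ with $\Sigma=\bigoplus_{x\in\mathbb{Z}^k}G_x$, $G_x\cong G$, $g_x$ denoting $g\in G$ placed in $G_x$, and $\alpha(x)(g_y)=g_{x+y}$. $\Sigma$ is the set of torsion elements of $\Gamma$, hence invariant under every automorphism. For $m\in\mathbb{Z}^k\subset\Gamma$, $\tau_m:\Sigma\to\Sigma$ denotes conjugation $h\mapsto mhm^{-1}$ restricted to $\Sigma$, i.e. $\tau_m=\alpha(m)$. *)

From HB Require Import structures.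
From Stdlib Require Lists.List.
From mathcomp Require Import all_boot all_order all_algebra.
Set Implicit Arguments. Unset Strict Implicit. Unset Printing Implicit Defensive.
Import GRing.Theory.
Local Open Scope ring_scope.

(* Generic twisted conjugacy, relativized to a subset P of a carrier T
   (P is the group, on which mul/inv restrict to the group law). *)
Definition twconj (T : Type) (mul : T -> T -> T) (inv : T -> T) (P : T -> Prop)
  (psi : T -> T) (x y : T) : Prop :=
  exists g, P g /\ y = mul (mul g x) (psi (inv g)).

Definition reid_finite (T : Type) (mul : T -> T -> T) (inv : T -> T) (P : T -> Prop)
  (psi : T -> T) : Prop :=
  exists s : seq T, (forall y, Stdlib.Lists.List.In y s -> P y) /\
    forall x, P x -> exists y, Stdlib.Lists.List.In y s /\ twconj mul inv P psi x y.

Definition reid_reps (T : Type) (mul : T -> T -> T) (inv : T -> T) (P : T -> Prop)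
  (psi : T -> T) (S : T -> Prop) : Prop :=
  (forall r, S r -> P r) /\
  (forall x, P x -> exists r, S r /\ twconj mul inv P psi x r) /\
  (forall r1 r2, S r1 -> S r2 -> twconj mul inv P psi r1 r2 -> r1 = r2).

Definition Zk (k : nat) := 'rV[int]_k.

(* Carrier of G wr Z^k : pairs (f, m) with f : Z^k -> G; the group consists of
   those with f finitely supported. f x is the G_x-coordinate. *)
Definition Wr (G : finZmodType) (k : nat) := ((Zk k -> G) * Zk k)%type.

Definition fin_supp (G : finZmodType) (k : nat) (f : Zk k -> G) : Prop :=
  exists s : seq (Zk k), forall x, x \notin s -> f x = 0.

Definition inGamma (G : finZmodType) (k : nat) (x : Wr G k) : Prop := fin_supp x.1.

Definition inSigma (G : finZmodType) (k : nat) (x : Wr G k) : Prop :=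
  inGamma x /\ x.2 = 0.

(* Semidirect product law with alpha(m)(g_y) = g_{m+y}:
   (f,m)(g,n) = (f + alpha(m) g, m + n), (alpha(m) g)(x) = g(x - m). *)
Definition wr_mul (G : finZmodType) (k : nat) (a b : Wr G k) : Wr G k :=
  (fun x => a.1 x + b.1 (x - a.2), a.2 + b.2).
Definition wr_inv (G : finZmodType) (k : nat) (a : Wr G k) : Wr G k :=
  (fun x => - a.1 (x + a.2), - a.2).
Definition wr_one (G : finZmodType) (k : nat) : Wr G k := (fun _ => 0, 0).

Definition wr_Z (G : finZmodType) (k : nat) (m : Zk k) : Wr G k := (fun _ => 0, m).

Definition is_wr_aut (G : finZmodType) (k : nat) (phi : Wr G k -> Wr G k) : Prop :=
  (forall x, inGamma x -> inGamma (phi x)) /\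
  (forall x y, inGamma x -> inGamma y -> phi (wr_mul x y) = wr_mul (phi x) (phi y)) /\
  (forall x y, inGamma x -> inGamma y -> phi x = phi y -> x = y) /\
  (forall y, inGamma y -> exists x, inGamma x /\ phi x = y).

(* induced automorphism on Gamma/Sigma = Z^k (quotient map = 2nd projection) *)
Definition phibar (G : finZmodType) (k : nat) (phi : Wr G k -> Wr G k) (m : Zk k) : Zk k :=
  (phi (wr_Z G m)).2.

Definition tau_phi (G : finZmodType) (k : nat) (phi : Wr G k -> Wr G k) (m : Zk k)
  (x : Wr G k) : Wr G k :=
  wr_mul (wr_mul (wr_Z G m) (phi x)) (wr_inv (wr_Z G m)).

Definition R_Gamma_fin (G : finZmodType) (k : nat) (phi : Wr G k -> Wr G k) :=
  reid_finite (@wr_mul G k) (@wr_inv G k) (@inGamma G k) phi.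
Definition R_Zk_fin (k : nat) (psi : Zk k -> Zk k) :=
  reid_finite (fun a b : Zk k => a + b) (fun a => - a) (fun _ => True) psi.
Definition R_Sigma_fin (G : finZmodType) (k : nat) (psi : Wr G k -> Wr G k) :=
  reid_finite (@wr_mul G k) (@wr_inv G k) (@inSigma G k) psi.
Definition Zk_reps (k : nat) (psi : Zk k -> Zk k) (S : Zk k -> Prop) :=
  reid_reps (fun a b : Zk k => a + b) (fun a => - a) (fun _ => True) psi S.

(* Sigma is the torsion subgroup of Gamma, so phi preserves the extension
   Sigma -> Gamma -> Z^k and the Reidemeister classes of phi project onto those
   of phibar.  Translating by m, the phi-classes meeting the coset Sigma m are
   images of the (tau_m o phi')-classes of Sigma; they correspond bijectively as
   soon as phibar has no nonzero fixed point.  That is automatic when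
   R(phibar) < oo: by pigeonhole some positive multiple of every basis vector
   lies in the image of 1 - phibar, so det (1 - phibar) <> 0.  Hence R(phi) is
   the sum of R(tau_m o phi') over representatives m of the phibar-classes. *)

From HB Require Import structures.
From mathcomp Require Import all_boot all_order all_algebra all_fingroup cyclic.
From Stdlib Require Import Classical FunctionalExtensionality.
Set Implicit Arguments. Unset Strict Implicit. Unset Printing Implicit Defensive.
Import GRing.Theory Num.Theory FinRing.Theory.
Local Open Scope ring_scope.

Lemma seq_pigeonhole (T : Type) (s : seq T) (R : nat -> T -> Prop) :
  (forall c, exists2 y, List.In y s & R c y) ->
  exists c1 c2 y, [/\ (c1 < c2)%N, R c1 y & R c2 y].
Proof.
elim: s R => [|a s IHs] R hR; first by have [] := hR 0%N.
have [[c1 [c2 [lt12 R1 R2]]]|no_pair] :=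
  classic (exists c1 c2, [/\ (c1 < c2)%N, R c1 a & R c2 a]).
  by exists c1, c2, a.
have [[c0 Rc0]|no_a] := classic (exists c0, R c0 a).
  have hR' c : exists2 y, List.In y s & R (c + c0.+1)%N y.
    have [y [ay|sy] Ry] := hR (c + c0.+1)%N; last by exists y.
    exfalso; apply: no_pair; exists c0, (c + c0.+1)%N.
    by rewrite -ay in Ry; split=> //; rewrite addnS ltnS leq_addl.
  have [c1 [c2 [y [lt12 R1 R2]]]] := IHs _ hR'.
  by exists (c1 + c0.+1)%N, (c2 + c0.+1)%N, y; rewrite ltn_add2r.
apply: IHs => c; have [y [ay|sy] Ry] := hR c; last by exists y.
by exfalso; apply: no_a; exists c; rewrite ay.
Qed.

Section ZkFixedPoints.
Variables (k : nat) (psi : Zk k -> Zk k).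
Hypothesis psiD : forall a b, psi (a + b) = psi a + psi b.

Let psiB : forall a b, psi (a - b) = psi a - psi b.
Proof.
have psi0 : psi 0 = 0 by apply/(addrI (psi 0)); rewrite -psiD !addr0.
by move=> a b; rewrite psiD; congr (_ + _); apply/(addrI (psi b)); rewrite -psiD !subrr.
Qed.

HB.instance Definition _ := GRing.isZmodMorphism.Build _ _ psi psiB.

Let psiZ : scalable psi.
Proof. by move=> z v; rewrite -[z]intz !scaler_int raddfMz. Qed.

HB.instance Definition _ := GRing.isScalable.Build int _ _ *:%R psi psiZ.

Lemma mul_sub_lin1 v : v *m (1%:M - lin1_mx psi) = v - psi v.
Proof. by rewrite mulmxBr mulmx1 mul_rV_lin1. Qed.

Lemma twconj_Zk_mul g x : g + x + psi (- g) = x + g *m (1%:M - lin1_mx psi).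
Proof. by rewrite mul_sub_lin1 raddfN addrAC addrC. Qed.

Lemma twconj_Zk_trans x y z :
  twconj (fun a b : Zk k => a + b) (fun a => - a) (fun _ => True) psi x y ->
  twconj (fun a b : Zk k => a + b) (fun a => - a) (fun _ => True) psi y z ->
  twconj (fun a b : Zk k => a + b) (fun a => - a) (fun _ => True) psi x z.
Proof.
case=> g [_ ->] [h [_ ->]]; exists (h + g); split=> //.
by rewrite !twconj_Zk_mul mulmxDl addrA addrAC.
Qed.

Hypothesis psi_fin : R_Zk_fin psi.

(* By pigeonhole two multiples of ['e_j] are twisted conjugate, and their
   difference then lies in the image of [1 - psi]. *)
Lemma delta_mulrn_sub_image (j : 'I_k) :
  exists2 c : nat, (0 < c)%N & exists w : Zk k, w *m (1%:M - lin1_mx psi) = 'e_j *+ c.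
Proof.
have [s [_ cover]] := psi_fin.
have [|c1 [c2 [y [lt12 [g1 [_ ->]] [g2 [_]]]]]] :=
  @seq_pigeonhole _ s (fun c y => twconj (fun a b : Zk k => a + b) (fun a => - a)
                                    (fun _ => True) psi ('e_j *+ c) y).
  by move=> c; have [y [sy cy]] := cover ('e_j *+ c) I; exists y.
rewrite !twconj_Zk_mul => E.
exists (c2 - c1)%N; first by rewrite subn_gt0.
exists (g1 - g2); apply/eqP.
by rewrite mulmxBl mulrnBr ?(ltnW lt12) // subr_eq addrAC -E [_ *+ c1 + _]addrC addrK.
Qed.

Lemma det_sub_lin1_neq0 : \det (1%:M - lin1_mx psi) != 0.
Proof.
set M := 1%:M - lin1_mx psi.
have cwP j : exists cw : nat * Zk k, (0 < cw.1)%N /\ cw.2 *m M = 'e_j *+ cw.1.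
  by have [c c_gt0 [w wM]] := delta_mulrn_sub_image j; exists (c, w).
have {cwP} [cw cwP] := fin_all_exists cwP.
have WM : (\matrix_j (cw j).2) *m M = diag_mx (\row_j ((cw j).1)%:R).
  apply/row_matrixP => j.
  by rewrite row_mul rowK row_diag_mx mxE scaler_nat (cwP j).2.
apply/eqP => detM0; have := congr1 determinant WM.
rewrite det_mulmx detM0 mulr0 det_diag => /esym/eqP; apply/negP.
by apply/prodf_neq0 => j _; rewrite mxE pnatr_eq0 -lt0n (cwP j).1.
Qed.

Lemma fixpoint_eq0 n : psi n = n -> n = 0.
Proof.
move=> psin; apply/eqP; apply: contraR det_sub_lin1_neq0 => n_neq0.
by apply/det0P; exists n; rewrite // mul_sub_lin1 psin subrr.
Qed.

End ZkFixedPoints.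

Section FiniteCovers.
Variables (A B : Type) (Q : B -> Prop) (R : A -> B -> Prop).

(* [reid_finite mul inv P psi] unfolds to [fin_cover P (twconj mul inv P psi) P]. *)
Definition fin_cover (P : A -> Prop) : Prop :=
  exists L : seq B, (forall b, List.In b L -> Q b) /\
    forall a, P a -> exists b, List.In b L /\ R a b.

Lemma fin_cover_sub (P P' : A -> Prop) :
  (forall a, P a -> P' a) -> fin_cover P' -> fin_cover P.
Proof. by move=> PP' [L [LQ cover]]; exists L; split=> // a /PP'/cover. Qed.

Lemma fin_cover_bigcup (I : Type) (s : seq I) (P : I -> A -> Prop) :
  (forall i, List.In i s -> fin_cover (P i)) ->
  fin_cover (fun a => exists i, List.In i s /\ P i a).
Proof.
elim: s => [|i s IHs] coverP; first by exists [::]; split=> // a [? []].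
have [Li [LiQ coveri]] := coverP i (or_introl erefl).
have [Ls [LsQ covers]] := IHs (fun j sj => coverP j (or_intror sj)).
exists (Li ++ Ls); split=> [b /List.in_app_iff [/LiQ|/LsQ] //|a [j [[<-|sj] Pja]]].
  have [b [Lib Rab]] := coveri a Pja.
  by exists b; rewrite List.in_app_iff; auto.
have [b [Lsb Rab]] := covers a (ex_intro _ j (conj sj Pja)).
by exists b; rewrite List.in_app_iff; auto.
Qed.

Lemma fin_cover_trans (P P' : A -> Prop) (R' : A -> A -> Prop) :
  (forall a a' b, R' a a' -> R a' b -> R a b) -> fin_cover P' ->
  (forall a, P a -> exists a', P' a' /\ R' a a') -> fin_cover P.
Proof.
move=> RR' [L [LQ cover]] toP'; exists L; split=> // a.
by move=> /toP' [a' [/cover [b [Lb Ra'b]] Raa']]; exists b; split=> //; apply: RR' Raa' Ra'b.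
Qed.

End FiniteCovers.

Lemma fin_cover_clique (A : Type) (Q : A -> Prop) (R : A -> A -> Prop) (P : A -> Prop) :
  (forall a, P a -> Q a) -> (forall a a', P a -> P a' -> R a a') -> fin_cover Q R P.
Proof.
move=> PQ Pclique; have [[a0 Pa0]|noP] := classic (exists a0, P a0).
  exists [:: a0]; split=> [b [<-|[]]|a Pa]; first exact: PQ.
  by exists a0; split; [left|apply: Pclique].
by exists [::]; split=> // a Pa; case: noP; exists a.
Qed.

Lemma fin_cover_refine (A : Type) (Q Q' : A -> Prop) (R : A -> A -> Prop) (P : A -> Prop) :
  (forall a b c, R a b -> R b c -> R a c) -> fin_cover Q R P ->
  (forall b, Q b -> exists c, Q' c /\ R b c) -> fin_cover Q' R P.
Proof.
move=> Rtrans [L [LQ cover]] toQ'.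
apply: (fin_cover_trans Rtrans (P' := fun b => exists i, List.In i L /\ b = i)).
  apply: fin_cover_bigcup => i /LQ /toQ' [c [Q'c Ric]].
  by exists [:: c]; split=> [b [<-|[]] //|b ->]; exists c; split=> //; left.
by move=> a /cover [b [Lb Rab]]; exists b; split=> //; exists b.
Qed.

Lemma mulrn_card (G : finZmodType) (x : G) : x *+ #|G| = 0.
Proof. by rewrite -zmodXgE -cardsT expg_cardG ?in_setT. Qed.

Section WreathGroup.
Variables (G : finZmodType) (k : nat).
Local Notation T := (Wr G k).
Local Notation wmul := (@wr_mul G k).
Local Notation winv := (@wr_inv G k).
Local Notation wone := (@wr_one G k).
Local Notation wZ := (wr_Z G).

Lemma wr_eq (a b : T) : a.1 =1 b.1 -> a.2 = b.2 -> a = b.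
Proof. by case: a b => f m [g n] /= /functional_extensionality -> ->. Qed.

Lemma wr_mulA : associative wmul.
Proof. by move=> a b c; apply: wr_eq => [x|] /=; rewrite ?opprD !addrA. Qed.

Lemma wr_mul1g : left_id wone wmul.
Proof. by move=> a; apply: wr_eq => [x|] /=; rewrite ?add0r ?subr0. Qed.

Lemma wr_mulg1 : right_id wone wmul.
Proof. by move=> a; apply: wr_eq => [x|] /=; rewrite addr0. Qed.

Lemma wr_mulVg a : wmul (winv a) a = wone.
Proof. by apply: wr_eq => [x|] /=; rewrite ?opprK addNr. Qed.

Lemma wr_mulgV a : wmul a (winv a) = wone.
Proof. by apply: wr_eq => [x|] /=; rewrite ?subrK subrr. Qed.

Lemma wr_mulKg a b : wmul (winv a) (wmul a b) = b.
Proof. by rewrite wr_mulA wr_mulVg wr_mul1g. Qed.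

Lemma wr_mulgK a b : wmul (wmul a b) (winv b) = a.
Proof. by rewrite -wr_mulA wr_mulgV wr_mulg1. Qed.

Lemma wr_mulgVK a b : wmul (wmul a (winv b)) b = a.
Proof. by rewrite -wr_mulA wr_mulVg wr_mulg1. Qed.

Lemma wr_inv_uniq a b : wmul a b = wone -> a = winv b.
Proof. by move=> ab1; rewrite -(wr_mulgK a b) ab1 wr_mul1g. Qed.

Lemma wr_invM a b : winv (wmul a b) = wmul (winv b) (winv a).
Proof.
by symmetry; apply: wr_inv_uniq; rewrite -wr_mulA (wr_mulA (winv a)) wr_mulVg wr_mul1g wr_mulVg.
Qed.

Lemma wr_invK a : winv (winv a) = a.
Proof. by symmetry; apply: wr_inv_uniq; rewrite wr_mulgV. Qed.

Lemma wr_invZ (m : Zk k) : winv (wZ m) = wZ (- m).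
Proof. by apply: wr_eq => [x|] //=; rewrite oppr0. Qed.

Lemma wr_mulZ (m n : Zk k) : wmul (wZ m) (wZ n) = wZ (m + n).
Proof. by apply: wr_eq => [x|] //=; rewrite addr0. Qed.

Lemma wr_decomp (a : T) : wmul (a.1, 0) (wZ a.2) = a.
Proof. by apply: wr_eq => [x|] /=; rewrite ?addr0 ?add0r. Qed.

Lemma inGamma_one : inGamma wone.
Proof. by exists [::]. Qed.

Lemma inGamma_Z (m : Zk k) : inGamma (wZ m).
Proof. by exists [::]. Qed.

Lemma inGamma_mul a b : inGamma a -> inGamma b -> inGamma (wmul a b).
Proof.
case=> sa a0 [sb b0]; exists (sa ++ map (+%R^~ a.2) sb) => x.
rewrite mem_cat negb_or => /andP [xNsa xNsb] /=.
rewrite a0 // b0 ?add0r //; apply: contra xNsb => xsb.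
by apply/mapP; exists (x - a.2); rewrite ?subrK.
Qed.

Lemma inGamma_inv a : inGamma a -> inGamma (winv a).
Proof.
case=> sa a0; exists (map (+%R^~ (- a.2)) sa) => x xNs /=.
rewrite a0 ?oppr0 //; apply: contra xNs => xs.
by apply/mapP; exists (x + a.2); rewrite ?addrK.
Qed.

Definition wr_exp (a : T) n := iter n (wmul a) wone.

Lemma wr_exp_snd a n : (wr_exp a n).2 = a.2 *+ n.
Proof. by elim: n => [|n IHn] //=; rewrite IHn mulrS. Qed.

Lemma inGamma_exp a n : inGamma a -> inGamma (wr_exp a n).
Proof. by move=> aG; elim: n => [|n IHn]; [apply: inGamma_one|apply: inGamma_mul]. Qed.

Lemma wr_exp_card a : a.2 = 0 -> wr_exp a #|G| = wone.
Proof.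
move=> a2; suff -> n : wr_exp a n = (fun x => a.1 x *+ n, 0).
  by apply: wr_eq => [x|] //=; rewrite mulrn_card.
elim: n => [|n IHn]; first by apply: wr_eq.
by rewrite /= IHn; apply: wr_eq => [x|] /=; rewrite ?a2 ?subr0 ?mulrS ?addr0.
Qed.

End WreathGroup.

Section Endomorphism.
Variables (G : finZmodType) (k : nat) (phi : Wr G k -> Wr G k).
Hypotheses (phiG : forall x, inGamma x -> inGamma (phi x))
  (phiM : forall x y, inGamma x -> inGamma y -> phi (wr_mul x y) = wr_mul (phi x) (phi y)).
Local Notation wmul := (@wr_mul G k).
Local Notation winv := (@wr_inv G k).
Local Notation wone := (@wr_one G k).
Local Notation wZ := (wr_Z G).
Local Notation tw := (twconj wmul winv (@inGamma G k) phi).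
Local Notation twZ :=
  (twconj (fun a b : Zk k => a + b) (fun a => - a) (fun _ => True) (phibar phi)).
Local Notation tw_tau m := (twconj wmul winv (@inSigma G k) (tau_phi phi m)).

Lemma phi_one : phi wone = wone.
Proof.
have := phiM (inGamma_one G k) (inGamma_one G k).
by rewrite wr_mulg1 => /(congr1 (wmul^~ (winv (phi wone)))); rewrite wr_mulgK wr_mulgV.
Qed.

Lemma phi_exp x n : inGamma x -> phi (wr_exp x n) = wr_exp (phi x) n.
Proof.
move=> xG; elim: n => [|n IHn] /=; first exact: phi_one.
by rewrite phiM ?IHn //; apply: inGamma_exp.
Qed.

(* Z^k is torsion-free, so phi maps the torsion subgroup Sigma into Sigma. *)
Lemma phi_Sigma_snd x : inSigma x -> (phi x).2 = 0.
Proof.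
case=> xG x2; have /eqP := wr_exp_snd (phi x) #|G|.
rewrite -phi_exp // wr_exp_card // phi_one eq_sym => /eqP/rowP phix_tors.
have cardG_gt0 : (0 < #|G|)%N by apply/card_gt0P; exists 0.
apply/rowP => i; have := phix_tors i; rewrite !mxE mulmxnE => /eqP.
by rewrite mulrn_eq0 gtn_eqF //= => /eqP.
Qed.

Lemma phibar_add a b : phibar phi (a + b) = phibar phi a + phibar phi b.
Proof. by rewrite /phibar -wr_mulZ phiM //; apply: inGamma_Z. Qed.

Lemma phi_snd y : inGamma y -> (phi y).2 = phibar phi y.2.
Proof.
move=> yG; have y2G : inGamma (wZ y.2) by apply: inGamma_Z.
by rewrite -{1}(wr_decomp y) phiM //= phi_Sigma_snd ?add0r.
Qed.

Lemma tw_sym x y : tw x y -> tw y x.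
Proof.
case=> g [gG ->]; have giG := inGamma_inv gG.
exists (winv g); split=> //; rewrite wr_invK (wr_mulA (winv g)) wr_mulKg.
by rewrite -wr_mulA -phiM // wr_mulVg phi_one wr_mulg1.
Qed.

Lemma tw_trans x y z : tw x y -> tw y z -> tw x z.
Proof.
case=> g [gG ->] [h [hG ->]]; have giG := inGamma_inv gG; have hiG := inGamma_inv hG.
by exists (wmul h g); split; [apply: inGamma_mul|rewrite wr_invM phiM // !wr_mulA].
Qed.

Lemma twconj_tau_phi_coset m x y : tw_tau m x y <->
  exists g, inSigma g /\ wmul y (wZ m) = wmul (wmul g (wmul x (wZ m))) (phi (winv g)).
Proof.
have tauE g z : wmul (wmul (wmul g x) (tau_phi phi m z)) (wZ m) =
                wmul (wmul g (wmul x (wZ m))) (phi z).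
  by rewrite /tau_phi !wr_mulA wr_mulgVK.
split=> [[g [gS ->]]|[g [gS E]]]; first by exists g; split; last exact: tauE.
exists g; split=> //.
by rewrite -(wr_mulgK y (wZ m)) E -tauE wr_mulgK.
Qed.

Lemma R_Zk_fin_phibar : R_Gamma_fin phi -> R_Zk_fin (phibar phi).
Proof.
case=> s [_ cover]; exists (List.map snd s); split=> // m _.
have [y [sy [g [gG yE]]]] := cover _ (inGamma_Z G m).
exists y.2; split; first exact: List.in_map.
by exists g.2; split=> //; rewrite yE /= phi_snd //; apply: inGamma_inv.
Qed.

(* Twisting by an element outside Sigma would produce a fixed point of phibar. *)
Lemma twconj_tau_phi_of_tw m x y : (forall n, phibar phi n = n -> n = 0) ->
  inSigma x -> inSigma y -> tw (wmul x (wZ m)) (wmul y (wZ m)) -> tw_tau m x y.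
Proof.
move=> phibar_fix [_ x2] [_ y2] [g [gG E]]; apply/twconj_tau_phi_coset.
exists g; split=> //; split=> //; have giG := inGamma_inv gG.
move/(congr1 snd): E; rewrite /= phi_snd //= x2 y2 !add0r => E2.
have phibar_fixes : phibar phi (- g.2) = - g.2.
  by apply: (addrI (g.2 + m)); rewrite -E2 addrAC subrr add0r.
by apply/eqP; rewrite -oppr_eq0; apply/eqP/phibar_fix.
Qed.

Lemma R_Sigma_fin_tau_phi : R_Gamma_fin phi -> R_Zk_fin (phibar phi) ->
  forall m, R_Sigma_fin (tau_phi phi m).
Proof.
move=> [s [_ cover]] /(fixpoint_eq0 phibar_add) phibar_fix m.
apply: (@fin_cover_sub _ _ _ _ _
  (fun a => exists y, List.In y s /\ (inSigma a /\ tw (wmul a (wZ m)) y))).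
  move=> a aS; have [y [sy ay]] := cover _ (inGamma_mul aS.1 (inGamma_Z G m)).
  by exists y.
apply: fin_cover_bigcup => y _.
apply: fin_cover_clique => [a [] //|a a' [aS ay] [a'S a'y]].
exact: twconj_tau_phi_of_tw (tw_trans ay (tw_sym a'y)).
Qed.

Lemma R_Gamma_fin_coset y : R_Sigma_fin (tau_phi phi y) ->
  fin_cover (@inGamma G k) tw (fun x => inGamma x /\ x.2 = y).
Proof.
case=> ls [lsS cover]; exists (List.map (wmul^~ (wZ y)) ls); split.
  move=> _ /List.in_map_iff [s' [<- /lsS [s'G _]]].
  exact: inGamma_mul s'G (inGamma_Z G y).
move=> x [xG x2].
have [s' [ls_s' /twconj_tau_phi_coset [g [[gG _] E]]]] := cover (x.1, 0) (conj xG erefl).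
exists (wmul s' (wZ y)); split; first exact: List.in_map.
by exists g; split; last rewrite E -x2 wr_decomp.
Qed.

Lemma R_Gamma_fin_of_cover (Q : Zk k -> Prop) :
  fin_cover Q twZ (fun _ => True) ->
  (forall y, Q y -> R_Sigma_fin (tau_phi phi y)) -> R_Gamma_fin phi.
Proof.
case=> s [sQ cover] tauS.
apply: (fin_cover_trans tw_trans
  (P' := fun x => exists y, List.In y s /\ (inGamma x /\ x.2 = y))).
  by apply: fin_cover_bigcup => y sy; apply/R_Gamma_fin_coset/tauS/sQ.
move=> x xG; have [y [sy [n [_ yE]]]] := cover x.2 I.
have nG : inGamma (wZ n) by apply: inGamma_Z.
exists (wmul (wmul (wZ n) x) (phi (winv (wZ n)))); split; last by exists (wZ n).
exists y; split=> //; split; last by rewrite /= wr_invZ yE.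
by apply/inGamma_mul/phiG/inGamma_inv; first apply: inGamma_mul.
Qed.

End Endomorphism.

Theorem mainTheorem2 (G : finZmodType) (k : nat) (hk : (0 < k)%N)
  (phi : Wr G k -> Wr G k) (hphi : is_wr_aut phi) :
  (R_Gamma_fin phi <->
     R_Zk_fin (phibar phi) /\ (forall m : Zk k, R_Sigma_fin (tau_phi phi m)))
  /\
  (forall S : Zk k -> Prop, Zk_reps (phibar phi) S ->
     R_Zk_fin (phibar phi) ->
     (forall m, S m -> R_Sigma_fin (tau_phi phi m)) ->
     R_Gamma_fin phi).
Proof.
have [phiG [phiM _]] := hphi.
have Zk_fin := R_Zk_fin_phibar phiM.
split; first split.
- by move=> Gfin; split; [apply: Zk_fin | apply: R_Sigma_fin_tau_phi (Zk_fin Gfin)].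
- by case=> Zfin tauS; apply: (R_Gamma_fin_of_cover phiG phiM Zfin) => y _.
- move=> S [_ [reps _]] Zfin tauS; apply: (R_Gamma_fin_of_cover phiG phiM _ tauS).
  apply: fin_cover_refine Zfin _ => [|y _]; last exact: reps.
  exact: twconj_Zk_trans (phibar_add phiM).
Qed.
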